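(* Let $\mathcal{H}$ be a symmetric and complete hypothesis set of functions $\mathcal{X}\times\overline{\mathcal{Y}}\to\mathbb{R}$, let $c\colon\mathcal{X}\times\mathcal{Y}\to[0,1]$ be any cost function, and let $\Psi(t)=1-t$. Then for all $h\in\mathcal{H}$ and any distribution on $\mathcal{X}\times\mathcal{Y}$, $$\mathcal{E}_{\mathsf{L}_{\mathrm{def}}}(h)-\mathcal{E}^*_{\mathsf{L}_{\mathrm{def}}}(\mathcal{H})+\mathcal{M}_{\mathsf{L}_{\mathrm{def}}}(\mathcal{H})\le (n+1)\big(\mathcal{E}_{\mathsf{L}_{\mathrm{RL2D}}}(h)-\mathcal{E}^*_{\mathsf{L}_{\mathrm{RL2D}}}(\mathcal{H})+\mathcal{M}_{\mathsf{L}_{\mathrm{RL2D}}}(\mathcal{H})\big).$$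
   Context: Learning to defer. $\mathcal{X}$ is an input space, $\mathcal{Y}=[n]$, $\overline{\mathcal{Y}}=\{1,\dots,n+1\}$ with $n+1$ meaning ''defer''. For $h\colon\mathcal{X}\times\overline{\mathcal{Y}}\to\mathbb{R}$, $\mathsf{h}(x)=\operatorname{argmax}_{y\in\overline{\mathcal{Y}}}h(x,y)$ with a fixed deterministic tie-breaking rule. Given a cost $c\colon\mathcal{X}\times\mathcal{Y}\to[0,1]$, the deferral loss is $\mathsf{L}_{\mathrm{def}}(h,x,y)=1_{\mathsf{h}(x)\neq y}1_{\mathsf{h}(x)\in[n]}+c(x,y)1_{\mathsf{h}(x)=n+1}$, and for $\Psi\colon[0,1]\to\mathbb{R}_+\cup\{+\infty\}$ non-increasing the surrogate is $\mathsf{L}_{\mathrm{RL2D}}(h,x,y)=c(x,y)\Psi\big(\frac{e^{h(x,y)}}{\sum_{y'\in\overline{\mathcal{Y}}}e^{h(x,y')}}\big)+(1-c(x,y))\Psi\big(\frac{e^{h(x,y)}+e^{h(x,n+1)}}{\sum_{y'\in\overline{\mathcal{Y}}}e^{h(x,y')}}\big)$. For a loss $\mathsf{L}$: $\mathcal{E}_{\mathsf{L}}(h)=\mathbb{E}_{(x,y)}[\mathsf{L}(h,x,y)]$, $\mathcal{E}^*_{\mathsf{L}}(\mathcal{H})=\inf_{h\in\mathcal{H}}\mathcal{E}_{\mathsf{L}}(h)$, $\mathcal{M}_{\mathsf{L}}(\mathcal{H})=\mathcal{E}^*_{\mathsf{L}}(\mathcal{H})-\mathbb{E}_x[\inf_{h\in\mathcal{H}}\mathbb{E}_{y\mid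 x}[\mathsf{L}(h,x,y)]]$. $\mathcal{H}$ is symmetric if there is a family $\mathcal{F}$ of functions $\mathcal{X}\to\mathbb{R}$ with $\{[h(x,1),\dots,h(x,n+1)]:h\in\mathcal{H}\}=\{[f_1(x),\dots,f_{n+1}(x)]:f_i\in\mathcal{F}\}$ for every $x$; $\mathcal{H}$ is complete if $\{h(x,y):h\in\mathcal{H}\}=\mathbb{R}$ for every $(x,y)\in\mathcal{X}\times\mathcal{Y}$. *)

From HB Require Import structures.
From mathcomp Require Import all_boot all_order all_algebra.
From mathcomp Require Import all_classical all_reals all_analysis.
Set Implicit Arguments. Unset Strict Implicit. Unset Printing Implicit Defensive.
Import Order.TTheory GRing.Theory Num.Theory.
Local Open Scope ring_scope.
Local Open Scope classical_set_scope.

Section Defer.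
Variables (R : realType) (X : Type) (n : nat).

(* Labels Y = [n] are 'I_n (0-indexed); extended labels Ybar = 'I_n.+1,
   the last index ord_max (value n) meaning "defer". *)
Definition lab (y : 'I_n) : 'I_n.+1 := widen_ord (leqnSn n) y.
Definition defer : 'I_n.+1 := ord_max.

Definition hpred (h : X -> 'I_n.+1 -> R) (x : X) : 'I_n.+1 :=
  [arg max_(i > ord0) h x i]%O.

Definition L_def (c : X -> 'I_n -> R) (h : X -> 'I_n.+1 -> R) (x : X) (y : 'I_n) : R :=
  ((hpred h x != lab y) && (hpred h x != defer))%:R
  + c x y * (hpred h x == defer)%:R.

Definition softmax (h : X -> 'I_n.+1 -> R) (x : X) (i : 'I_n.+1) : R :=
  expR (h x i) / \sum_(j < n.+1) expR (h x j).

Definition L_RL2D (Psi : R -> R) (c : X -> 'I_n -> R) (h : X -> 'I_n.+1 -> R)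
    (x : X) (y : 'I_n) : R :=
  c x y * Psi (softmax h x (lab y))
  + (1 - c x y) * Psi ((expR (h x (lab y)) + expR (h x defer))
                        / \sum_(j < n.+1) expR (h x j)).

Definition symmetric_hyp (H : set (X -> 'I_n.+1 -> R)) : Prop :=
  exists F : set (X -> R), forall x : X,
    [set h x | h in H] =
    [set v : 'I_n.+1 -> R | exists f : 'I_n.+1 -> X -> R,
        (forall i, F (f i)) /\ v = (fun i => f i x)].

Definition complete_hyp (H : set (X -> 'I_n.+1 -> R)) : Prop :=
  forall (x : X) (y : 'I_n), [set h x (lab y) | h in H] = setT.

End Defer.

Section Risks.
Local Open Scope ereal_scope.
Variables (d : measure_display) (X : measurableType d) (R : realType) (n : nat).
(* The distribution on X * Y is given by its marginal mu on X and the
   conditional distribution eta x of y given x (finite Y). *)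
Variables (mu : probability X R) (eta : X -> 'I_n -> R).

Definition cond_risk (L : (X -> 'I_n.+1 -> R) -> X -> 'I_n -> R)
    (h : X -> 'I_n.+1 -> R) (x : X) : R :=
  (\sum_(y < n) eta x y * L h x y)%R.

Definition risk L h : \bar R := \int[mu]_x (cond_risk L h x)%:E.

Definition best_risk L (H : set (X -> 'I_n.+1 -> R)) : \bar R :=
  ereal_inf [set risk L h | h in H].

Definition min_gap L (H : set (X -> 'I_n.+1 -> R)) : \bar R :=
  best_risk L H
  - \int[mu]_x ereal_inf [set (cond_risk L h x)%:E | h in H].
End Risks.

From HB Require Import structures.
From mathcomp Require Import all_boot all_order all_algebra.
From mathcomp Require Import all_classical all_reals all_analysis.
From mathcomp Require Import measurable_realfun ring lra.
Import Order.TTheory GRing.Theory Num.Theory.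
Local Open Scope ring_scope.
Local Open Scope classical_set_scope.
Set Implicit Arguments. Unset Strict Implicit.

(* Fix x and let v(k) = eta x k for a label k and v(defer) = sum_y eta x y (1 - c x y).
   The conditional deferral risk of h is 1 - v(h(x)), and that of the surrogate with
   Psi(t) = 1 - t is 1 - sum_i v(i) s(i), where s is the softmax of the scores h(x, .).
   A symmetric and complete class realizes every score vector at x, so both conditional
   infima equal 1 - max v (for the surrogate, in the limit of scores peaked at an argmax
   of v). As h(x) is also an argmax of s, s(h(x)) >= 1/(n+1) and
   max v - sum_i v(i) s(i) >= s(h(x)) (max v - v(h(x))),
   so the conditional excess deferral risk is at most n+1 times the surrogate one.
   Integrating over x gives the bound: the minimizability gaps turn the best-in-class
   risks into expected conditional infima. *)

Lemma max_sub_at_mode_le (R : realFieldType) (I : finType) (v s : I -> R) (M : R) (p : I) :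
  (forall i, v i <= M) -> (forall i, 0 <= s i) -> \sum_i s i = 1 ->
  (forall i, s i <= s p) ->
  M - v p <= #|I|%:R * (M - \sum_i v i * s i).
Proof.
move=> v_le s_ge0 s_sum1 s_le.
have mean_le : \sum_i v i * s i <= v p * s p + M * (1 - s p).
  rewrite (bigD1 p) //= lerD2l -s_sum1 [X in M * (X - _)](bigD1 p) //=.
  rewrite addrAC subrr add0r mulr_sumr.
  by apply: ler_sum => i _; apply: ler_wpM2r.
have mode_ge : 1 <= #|I|%:R * s p.
  rewrite -[leLHS]s_sum1; apply: le_trans (ler_sum _ (fun i _ => s_le i)) _.
  by rewrite sumr_const mulr_natl.
have := v_le p; have := s_ge0 p; have card_ge0 : 0 <= #|I|%:R :> R by [].
nra.
Qed.

Section Softmax.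
Variables (R : realType) (X : Type) (n : nat).
Implicit Types (g : X -> 'I_n.+1 -> R) (x : X).

Lemma sum_expR_gt0 g x : 0 < \sum_(j < n.+1) expR (g x j).
Proof.
rewrite (bigD1 ord0) //= ltr_pwDl ?expR_gt0 //.
by apply: sumr_ge0 => j _; exact: expR_ge0.
Qed.

Lemma softmax_gt0 g x i : 0 < softmax g x i.
Proof. by rewrite divr_gt0 ?expR_gt0 ?sum_expR_gt0. Qed.

Lemma sum_softmax g x : \sum_(i < n.+1) softmax g x i = 1.
Proof. by rewrite -mulr_suml divff // gt_eqF ?sum_expR_gt0. Qed.

Lemma hpred_max g x i : g x i <= g x (hpred g x).
Proof. by rewrite /hpred; case: arg_maxP => //= j _; apply. Qed.

Lemma softmax_le_hpred g x i : softmax g x i <= softmax g x (hpred g x).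
Proof.
by rewrite ler_pM2r ?invr_gt0 ?sum_expR_gt0 // ler_expR hpred_max.
Qed.

Lemma softmax_peak g x p t :
  g x = (fun i => if i == p then t else 0) ->
  1 - softmax g x p = n%:R / (expR t + n%:R).
Proof.
move=> gx; have den_gt0 : 0 < expR t + n%:R by rewrite ltr_pwDl ?expR_gt0.
rewrite /softmax gx (bigD1 p) //= eqxx.
under eq_bigr => j /negPf -> do rewrite expR0.
rewrite sumr_const cardC1 card_ord /=.
by field; rewrite gt_eqF.
Qed.

End Softmax.

Section Labels.
Variable n : nat.

Lemma lab_lift (k : 'I_n) : lab k = lift (defer n) k.
Proof. by apply: val_inj; rewrite /= /bump leqNgt ltn_ord. Qed.

Lemma lab_or_defer (i : 'I_n.+1) : i = defer n \/ exists k, i = lab k.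
Proof.
by case: (unliftP (defer n) i) => [k ->|->]; [right; exists k; rewrite lab_lift | left].
Qed.

Lemma lab_eq (k y : 'I_n) : (lab k == lab y) = (k == y).
Proof. by rewrite -val_eqE /= val_eqE. Qed.

Lemma lab_neq_defer (k : 'I_n) : (lab k == defer n) = false.
Proof. by rewrite -val_eqE /= ltn_eqF. Qed.

End Labels.

Section ConditionalRisks.
Variables (d : measure_display) (X : measurableType d) (R : realType) (n : nat).
Variables (c eta : X -> 'I_n -> R).
Implicit Types (g : X -> 'I_n.+1 -> R) (x : X).

Local Notation L_lin := (L_RL2D (fun t : R => 1 - t) c).

Definition defer_value x : R := \sum_(y < n) eta x y * (1 - c x y).

Definition value x (i : 'I_n.+1) : R :=
  if unlift (defer n) i is Some k then eta x k else defer_value x.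

Definition max_value x : R := \big[Num.max/0]_(i < n.+1) value x i.

Lemma value_lab x k : value x (lab k) = eta x k.
Proof. by rewrite /value lab_lift liftK. Qed.

Lemma value_defer x : value x (defer n) = defer_value x.
Proof. by rewrite /value unlift_none. Qed.

Hypothesis c01 : forall x y, 0 <= c x y <= 1.
Hypothesis eta_ge0 : forall x y, 0 <= eta x y.
Hypothesis eta_sum1 : forall x, \sum_(y < n) eta x y = 1.

Lemma n_gt0 x : (0 < n)%N.
Proof.
case: (posnP n) => // n0; have := eta_sum1 x.
by rewrite big1 => [/eqP|[i i_lt] _]; [rewrite eq_sym oner_eq0 | exfalso; rewrite n0 in i_lt].
Qed.

Lemma cond_risk_def g x : cond_risk eta (L_def c) g x = 1 - value x (hpred g x).
Proof.
rewrite /cond_risk /L_def; case: (lab_or_defer (hpred g x)) => [->|[k ->]].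
  under eq_bigr => y _ do rewrite eqxx andbF mulr1 add0r.
  rewrite value_defer -[in RHS](eta_sum1 x) -sumrB.
  by apply: eq_bigr => y _; ring.
rewrite value_lab lab_neq_defer.
under eq_bigr => y _ do rewrite lab_eq andbT mulr0 addr0.
rewrite -[in RHS](eta_sum1 x) (bigD1 k) //= [in RHS](bigD1 k) //=.
rewrite eqxx mulr0 add0r addrAC subrr add0r.
by apply: eq_bigr => y; rewrite eq_sym => ->; rewrite mulr1.
Qed.

Lemma cond_risk_RL2D g x :
  cond_risk eta L_lin g x = 1 - \sum_(i < n.+1) value x i * softmax g x i.
Proof.
rewrite /cond_risk big_ord_recr /=.
under [in RHS]eq_bigr => k _ do rewrite value_lab.
rewrite value_defer -[in RHS](eta_sum1 x) /defer_value mulr_suml opprD addrA -!sumrB.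
by apply: eq_bigr => y _; rewrite /L_RL2D /softmax /lab /defer; ring.
Qed.

Lemma value_ge0 x i : 0 <= value x i.
Proof.
case: (lab_or_defer i) => [->|[k ->]]; rewrite ?value_lab // value_defer.
by apply: sumr_ge0 => y _; rewrite mulr_ge0 // subr_ge0; case/andP: (c01 x y).
Qed.

Lemma value_le1 x i : value x i <= 1.
Proof.
rewrite -(eta_sum1 x); case: (lab_or_defer i) => [->|[k ->]].
  rewrite value_defer; apply: ler_sum => y _.
  by rewrite ler_piMr // lerBlDr lerDl; case/andP: (c01 x y).
by rewrite value_lab (bigD1 k) //= lerDl sumr_ge0.
Qed.

Lemma value_le_max x i : value x i <= max_value x.
Proof. exact: le_bigmax. Qed.

Lemma max_value_attained x : exists p, max_value x = value x p.
Proof.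
exists [arg max_(i > ord0) value x i]%O.
by rewrite /max_value (bigmax_eq_arg _ ord0) // => i _; exact: value_ge0.
Qed.

Lemma max_value_le1 x : max_value x <= 1.
Proof. by have [p ->] := max_value_attained x; exact: value_le1. Qed.

Lemma expected_value_le_max g x :
  \sum_(i < n.+1) value x i * softmax g x i <= max_value x.
Proof.
rewrite -[leRHS]mulr1 -(sum_softmax g x) mulr_sumr; apply: ler_sum => i _.
by rewrite ler_wpM2r ?value_le_max // ltW ?softmax_gt0.
Qed.

Lemma cond_risk_def_01 g x : 0 <= cond_risk eta (L_def c) g x <= 1.
Proof.
by rewrite cond_risk_def subr_ge0 value_le1 //= lerBlDr lerDl value_ge0.
Qed.

Lemma cond_risk_RL2D_01 g x : 0 <= cond_risk eta L_lin g x <= 1.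
Proof.
rewrite cond_risk_RL2D subr_ge0 (le_trans (expected_value_le_max g x)) ?max_value_le1 //=.
rewrite lerBlDr lerDl; apply: sumr_ge0 => i _.
by rewrite mulr_ge0 ?value_ge0 // ltW ?softmax_gt0.
Qed.

Lemma one_sub_max_value_01 x : 0 <= 1 - max_value x <= 1.
Proof.
have [p ->] := max_value_attained x.
by rewrite subr_ge0 value_le1 //= lerBlDr lerDl value_ge0.
Qed.

Lemma cond_excess_def_le_RL2D g x :
  cond_risk eta (L_def c) g x - (1 - max_value x)
  <= n.+1%:R * (cond_risk eta L_lin g x - (1 - max_value x)).
Proof.
have shift (a b : R) : 1 - a - (1 - b) = b - a by rewrite opprB addrC subrKA.
rewrite cond_risk_def cond_risk_RL2D !shift.
have := max_sub_at_mode_le (value_le_max x) (fun i => ltW (softmax_gt0 g x i))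
  (sum_softmax g x) (softmax_le_hpred g x).
by rewrite card_ord.
Qed.

End ConditionalRisks.

Lemma symmetric_complete_realize (R : realType) (X : Type) (n : nat)
    (H : set (X -> 'I_n.+1 -> R)) :
  symmetric_hyp H -> complete_hyp H -> (0 < n)%N ->
  forall x (w : 'I_n.+1 -> R), exists2 g, H g & g x = w.
Proof.
move=> [F HF] complH n0 x w.
have F_onto r : exists f, F f /\ f x = r.
  have : [set h x (lab (Ordinal n0)) | h in H] r by rewrite complH.
  case=> g Hg <-; have : [set h x | h in H] (g x) by exists g.
  by rewrite HF => -[f [Ff ->]]; exists (f (lab (Ordinal n0))).
have [f Ff] := choice (fun i => F_onto (w i)).
have : [set h x | h in H] w.
  rewrite HF; exists f; split => [i|]; first exact: (Ff i).1.
  by apply/funext => i; rewrite (Ff i).2.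
by case=> g Hg gw; exists g.
Qed.

Section Infima.
Local Open Scope ereal_scope.
Variables (d : measure_display) (X : measurableType d) (R : realType) (n : nat).
Variables (H : set (X -> 'I_n.+1 -> R)) (c eta : X -> 'I_n -> R).
Hypothesis symH : symmetric_hyp H.
Hypothesis complH : complete_hyp H.
Hypothesis c01 : forall x y, (0 <= c x y <= 1)%R.
Hypothesis eta_ge0 : forall x y, (0 <= eta x y)%R.
Hypothesis eta_sum1 : forall x, (\sum_(y < n) eta x y = 1)%R.

Local Notation L_lin := (L_RL2D (fun t : R => 1 - t)%R c).

Let realize x := symmetric_complete_realize symH complH (n_gt0 eta_sum1 x) x.

Lemma inf_cond_risk_def x :
  ereal_inf [set (cond_risk eta (L_def c) g x)%:E | g in H] = (1 - max_value c eta x)%:E.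
Proof.
apply/le_anti/andP; split; last first.
  apply/ereal_infP => _ [g _ <-].
  by rewrite lee_fin cond_risk_def // lerB // value_le_max.
have [p ->] := max_value_attained c01 eta_ge0 x.
have [g Hg gx] := realize x (fun i => (i == p)%:R).
have -> : p = hpred g x.
  have := hpred_max g x p; rewrite gx eqxx /=.
  by case: eqP => [->|_] //; rewrite ler10.
by apply: ereal_inf_lbound; exists g; rewrite // cond_risk_def.
Qed.

Lemma inf_cond_risk_RL2D x :
  ereal_inf [set (cond_risk eta L_lin g x)%:E | g in H] = (1 - max_value c eta x)%:E.
Proof.
apply/le_anti/andP; split; last first.
  apply/ereal_infP => _ [g _ <-].
  by rewrite lee_fin cond_risk_RL2D // lerB // expected_value_le_max.
have [p max_p] := max_value_attained c01 eta_ge0 x.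
apply/lee_addgt0Pr => e e_gt0.
have n_pos : (0 < n%:R :> R)%R by rewrite ltr0n (n_gt0 eta_sum1 x).
(* These scores put mass [1 / (1 + e)] on [p]. *)
have [g Hg gx] := realize x (fun i => if i == p then ln (n%:R / e) else 0%R).
have := softmax_peak gx; rewrite lnK ?posrE ?divr_gt0 // => peak.
have peak_bounds : (0 <= 1 - softmax g x p <= e)%R.
  have e_ge0 := ltW e_gt0.
  rewrite peak divr_ge0 ?addr_ge0 ?divr_ge0 //=.
  rewrite ler_pdivrMr ?addr_gt0 ?divr_gt0 // mulrDr mulrC divfK ?gt_eqF //.
  by rewrite lerDl mulr_ge0.
have mode_le : (value c eta x p * softmax g x p
                <= \sum_i value c eta x i * softmax g x i)%R.
  rewrite (bigD1 p) //= lerDl; apply: sumr_ge0 => i _.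
  by rewrite mulr_ge0 ?value_ge0 // ltW ?softmax_gt0.
apply: le_trans (ereal_inf_lbound _) _; first by exists g.
rewrite cond_risk_RL2D // -EFinD lee_fin max_p.
have v_ge0 := value_ge0 c01 eta_ge0 x p; have v_le1 := value_le1 c01 eta_ge0 eta_sum1 x p.
case/andP: peak_bounds => sp_le1 sp_close; nra.
Qed.

End Infima.

Section FiniteBooleanCombinations.
Variables (d : measure_display) (X : measurableType d).

Lemma measurable_fun_has (A : Type) (s : seq A) (b : A -> X -> bool) :
  (forall a, measurable_fun setT (b a)) ->
  measurable_fun setT (fun x => has (b ^~ x) s).
Proof.
move=> mb; elim: s => [|a s IHs] //=; exact: measurable_or.
Qed.

Lemma measurable_fun_ffun (T : finType) (b : T -> X -> bool) (P : pred {ffun T -> bool}) :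
  (forall t, measurable_fun setT (b t)) ->
  measurable_fun setT (fun x => P [ffun t => b t x]).
Proof.
move=> mb.
have -> : (fun x => P [ffun t => b t x]) = fun x =>
    has (fun B => P B && ~~ has (fun t => b t x != B t) (enum T)) (enum {ffun T -> bool}).
  apply/funext => x; apply/idP/hasP => [PB|[B _ /andP[PB /hasPn eqB]]].
    exists [ffun t => b t x]; first by rewrite mem_enum.
    by rewrite PB; apply/hasPn => t _; rewrite ffunE eqxx.
  suff -> : [ffun t => b t x] = B by [].
  by apply/ffunP => t; rewrite ffunE; apply/eqP/negbNE/eqB; rewrite mem_enum.
apply: measurable_fun_has => B; apply: measurable_and => //.
apply: measurable_neg; apply: measurable_fun_has => t; case: (B t).
  by under eq_fun do rewrite eqb_id; exact: measurable_neg.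
by under eq_fun do rewrite eqbF_neg negbK; exact: mb.
Qed.

Lemma measurable_natr_bool (R : realType) (b : X -> bool) :
  measurable_fun setT b -> measurable_fun setT (fun x => (b x)%:R : R).
Proof.
move=> mb; rewrite (_ : (fun x => _) = fun x => if b x then 1 else 0).
  exact: measurable_fun_ifT.
by apply/funext => x; case: (b x).
Qed.

End FiniteBooleanCombinations.

Section Measurability.
Variables (d : measure_display) (X : measurableType d) (R : realType) (n : nat).
Variables (c eta : X -> 'I_n -> R) (h : X -> 'I_n.+1 -> R).
Hypothesis mc : forall y, measurable_fun setT (fun x => c x y).
Hypothesis meta : forall y, measurable_fun setT (fun x => eta x y).
Hypothesis mh : forall i, measurable_fun setT (fun x => h x i).

Local Notation L_lin := (L_RL2D (fun t : R => 1 - t) c).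

(* The argmax is a function of the finitely many comparisons [h x j <= h x i]. *)
Lemma measurable_hpred_eq k : measurable_fun setT (fun x => hpred h x == k).
Proof.
pose first_max (B : {ffun 'I_n.+1 * 'I_n.+1 -> bool}) :=
  odflt ord0 [pick i | [forall j, B (i, j)]].
rewrite (_ : (fun x => _) =
    fun x => first_max [ffun ij => h x ij.2 <= h x ij.1] == k).
  apply: (measurable_fun_ffun (b := fun ij x => h x ij.2 <= h x ij.1)
                              (fun B => first_max B == k)).
  by move=> ij; exact: measurable_fun_ler.
apply/funext => x; rewrite /hpred /Order.arg_max /extremum /first_max.
by congr (odflt _ _ == _); apply: eq_pick => i; apply: eq_forallb => j; rewrite ffunE.
Qed.

Lemma measurable_value i : measurable_fun setT (fun x => value c eta x i).
Proof.
rewrite /value; case: (unlift (defer n) i) => [k|] //.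
apply: measurable_sum => y; apply: measurable_funM => //.
exact: measurable_funB.
Qed.

Lemma measurable_max_value : measurable_fun setT (max_value c eta).
Proof.
rewrite /max_value; elim: (index_enum _) => [|i s IHs].
  by under eq_fun do rewrite big_nil; exact: measurable_cst.
by under eq_fun do rewrite big_cons; exact: measurable_maxr (measurable_value i) IHs.
Qed.

Lemma measurable_cond_risk_def : measurable_fun setT (cond_risk eta (L_def c) h).
Proof.
apply: measurable_sum => y; apply: measurable_funM => //.
apply: measurable_funD; first apply/measurable_natr_bool/measurable_and.
- exact/measurable_neg/measurable_hpred_eq.
- exact/measurable_neg/measurable_hpred_eq.
- exact/measurable_funM/measurable_natr_bool/measurable_hpred_eq.
Qed.

Lemma measurable_cond_risk_RL2D : measurable_fun setT (cond_risk eta L_lin h).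
Proof.
have mexp i : measurable_fun setT (fun x => expR (h x i)).
  by apply: measurableT_comp => //; exact: mh.
have minv : measurable_fun setT (fun x => (\sum_(j < n.+1) expR (h x j))^-1).
  rewrite (_ : (fun x => _) = (@powR R)^~ (-1) \o fun x => \sum_(j < n.+1) expR (h x j)).
    exact: measurableT_comp (measurable_powR (-1)) (measurable_sum _ (fun j => mexp j)).
  by apply/funext => x /=; rewrite powR_inv1 // ltW ?sum_expR_gt0.
apply: measurable_sum => y; apply: measurable_funM => //.
apply: measurable_funD; apply: measurable_funM => //; apply: measurable_funB => //.
  exact: measurable_funM.
by apply: measurable_funM => //; exact: measurable_funD.
Qed.

End Measurability.

Section Integration.
Local Open Scope ereal_scope.
Variables (d : measure_display) (X : measurableType d) (R : realType).

Lemma integrable_01 (mu : {finite_measure set X -> \bar R}) (f : X -> R) :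
  measurable_fun setT f -> (forall x, (0 <= f x <= 1)%R) ->
  mu.-integrable setT (EFin \o f).
Proof.
move=> mf f01; apply: measurable_bounded_integrable => //.
  by rewrite -ge0_fin_numE ?fin_num_measure.
exists 1%R; split; first exact: num_real.
move=> M M_gt1 x _; have /andP[f_ge0 f_le1] := f01 x.
by rewrite /= ger0_norm // (le_trans f_le1) ?ltW.
Qed.

Lemma integral_sub_le_scale (mu : {measure set X -> \bar R}) (f g a : X -> R) (C : R) :
  mu.-integrable setT (EFin \o f) -> mu.-integrable setT (EFin \o g) ->
  mu.-integrable setT (EFin \o a) ->
  (forall x, f x - a x <= C * (g x - a x))%R ->
  \int[mu]_x (f x)%:E - \int[mu]_x (a x)%:E
  <= C%:E * (\int[mu]_x (g x)%:E - \int[mu]_x (a x)%:E).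
Proof.
move=> intf intg inta fag.
have intga : mu.-integrable setT ((EFin \o g) \- (EFin \o a)) by exact: integrableB.
rewrite -!integralB_EFin // -integralZl //.
apply: le_integral => //; first exact: integrableB.
  exact: integrableZl.
by move=> x _; rewrite /= -EFinB -EFinM lee_fin fag.
Qed.

Variables (n : nat) (mu : probability X R) (eta : X -> 'I_n -> R).
Variables (L : (X -> 'I_n.+1 -> R) -> X -> 'I_n -> R) (H : set (X -> 'I_n.+1 -> R)).

Lemma risk_sub_best_add_min_gap h : H h ->
  (forall g x, (0 <= cond_risk eta L g x)%R) ->
  mu.-integrable setT (EFin \o cond_risk eta L h) ->
  risk mu eta L h - best_risk mu eta L H + min_gap mu eta L H
  = risk mu eta L h - \int[mu]_x ereal_inf [set (cond_risk eta L g x)%:E | g in H].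
Proof.
move=> Hh cond_risk_ge0 inth.
have best_fin : best_risk mu eta L H \is a fin_num.
  rewrite ge0_fin_numE; last first.
    by apply/ereal_infP => _ [g _ <-]; apply: integral_ge0 => x _; rewrite lee_fin.
  apply: le_lt_trans (integrable_lty measurableT inth).
  by apply: ereal_inf_lbound; exists h.
by rewrite /min_gap addeA subeK.
Qed.

End Integration.

Theorem theorem3 (d : measure_display) (X : measurableType d) (R : realType)
    (n : nat) (H : set (X -> 'I_n.+1 -> R)) (c : X -> 'I_n -> R)
    (mu : probability X R) (eta : X -> 'I_n -> R) (h : X -> 'I_n.+1 -> R) :
  symmetric_hyp H -> complete_hyp H ->
  (forall x y, 0 <= c x y <= 1) ->
  (forall y, measurable_fun setT (fun x => c x y)) ->
  (forall x y, 0 <= eta x y) -> (forall x, \sum_(y < n) eta x y = 1) ->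
  (forall y, measurable_fun setT (fun x => eta x y)) ->
  (forall g, H g -> forall i, measurable_fun setT (fun x => g x i)) ->
  H h ->
  (risk mu eta (L_def c) h - best_risk mu eta (L_def c) H
     + min_gap mu eta (L_def c) H <=
   (n.+1)%:R%:E * (risk mu eta (L_RL2D (fun t : R => 1 - t)%R c) h
     - best_risk mu eta (L_RL2D (fun t : R => 1 - t)%R c) H
     + min_gap mu eta (L_RL2D (fun t : R => 1 - t)%R c) H))%E.
Proof.
move=> symH complH c01 mc eta_ge0 eta_sum1 meta mH Hh.
have mh := mH h Hh.
have int_def := integrable_01 mu (measurable_cond_risk_def mc meta mh)
  (cond_risk_def_01 c01 eta_ge0 eta_sum1 h).
have int_RL2D := integrable_01 mu (measurable_cond_risk_RL2D mc meta mh)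
  (cond_risk_RL2D_01 c01 eta_ge0 eta_sum1 h).
have int_inf : mu.-integrable setT (EFin \o fun x => 1 - max_value c eta x).
  apply: integrable_01 (one_sub_max_value_01 c01 eta_ge0 eta_sum1).
  exact/measurable_funB/measurable_max_value.
have def_ge0 g x : 0 <= cond_risk eta (L_def c) g x.
  by case/andP: (cond_risk_def_01 c01 eta_ge0 eta_sum1 g x).
have RL2D_ge0 g x : 0 <= cond_risk eta (L_RL2D (fun t : R => 1 - t) c) g x.
  by case/andP: (cond_risk_RL2D_01 c01 eta_ge0 eta_sum1 g x).
rewrite !risk_sub_best_add_min_gap //.
under eq_integral do rewrite inf_cond_risk_def //.
under [X in (_ <= _ * (_ - X))%E]eq_integral do rewrite inf_cond_risk_RL2D //.
apply: integral_sub_le_scale => // x.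
exact: cond_excess_def_le_RL2D.
Qed.
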